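(* Let $z_1,z_2,z_3,z_4\in\mathbb{C}$ be the vertices of a convex quadrilateral, labelled in cyclic order around its boundary, and for $j=1,\dots,4$ (indices mod $4$) let $$\alpha_j=\angle z_{j+1}z_jz_{j+2},\qquad \beta_j=\angle z_{j+2}z_jz_{j-1},\qquad \gamma_j=\angle z_{j-1}z_jz_{j+1}.$$ Define $$S_1=\sum_{j=1}^4(\cos\alpha_j+\cos\beta_j+\cos\gamma_j),\qquad S_2=\sum_{j=1}^4(\cos\alpha_j+\cos\beta_j+\cos\gamma_j)(\cos\alpha_{j+1}+\cos\gamma_{j+2}+\cos\beta_{j+3}).$$ Then $8S_1+2S_2\ge 40$.
   Context: Angles $\angle XYZ\in[0,\pi]$ denote the usual unsigned angle at $Y$ between the segments $YX$ and $YZ$. *)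

From Stdlib Require Import Reals Lra.
From Coquelicot Require Import Coquelicot.
Open Scope R_scope.

Definition angle (X Y Z : C) : R :=
  acos (Re ((X - Y)%C * Cconj (Z - Y)%C) / (Cmod (X - Y)%C * Cmod (Z - Y)%C)).

(* Signed (doubled) area of the triangle a b c: positive iff a, b, c is a
   counterclockwise (left) turn. *)
Definition orient (a b c : C) : R := Im (Cconj (b - a)%C * (c - a)%C).

(* Cyclic indexing of the four vertices: index j is taken mod 4,
   index 0 <-> z1, 1 <-> z2, 2 <-> z3, 3 <-> z4. *)
Definition vtx (z1 z2 z3 z4 : C) (j : nat) : C :=
  match j mod 4 with
  | 0 => z1 | 1 => z2 | 2 => z3 | _ => z4
  end.

(* z1 z2 z3 z4 are the vertices, in cyclic order, of a (non-degenerate)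
   convex quadrilateral: all four consecutive turns are strictly in the same
   direction (either all counterclockwise or all clockwise). *)
Definition convex_quad (z1 z2 z3 z4 : C) : Prop :=
  let z := vtx z1 z2 z3 z4 in
  (forall j, (j < 4)%nat -> 0 < orient (z j) (z (j+1)%nat) (z (j+2)%nat)) \/
  (forall j, (j < 4)%nat -> orient (z j) (z (j+1)%nat) (z (j+2)%nat) < 0).

(* alpha_j = angle z_{j+1} z_j z_{j+2}, beta_j = angle z_{j+2} z_j z_{j-1},
   gamma_j = angle z_{j-1} z_j z_{j+1}; indices mod 4 (j-1 == j+3). *)
Definition alpha (z1 z2 z3 z4 : C) (j : nat) : R :=
  let z := vtx z1 z2 z3 z4 in angle (z (j+1)%nat) (z j) (z (j+2)%nat).
Definition beta (z1 z2 z3 z4 : C) (j : nat) : R :=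
  let z := vtx z1 z2 z3 z4 in angle (z (j+2)%nat) (z j) (z (j+3)%nat).
Definition gamma (z1 z2 z3 z4 : C) (j : nat) : R :=
  let z := vtx z1 z2 z3 z4 in angle (z (j+3)%nat) (z j) (z (j+1)%nat).

Definition csum (z1 z2 z3 z4 : C) (j : nat) : R :=
  cos (alpha z1 z2 z3 z4 j) + cos (beta z1 z2 z3 z4 j) + cos (gamma z1 z2 z3 z4 j).

Definition S1 (z1 z2 z3 z4 : C) : R := sum_f_R0 (csum z1 z2 z3 z4) 3.

Definition S2 (z1 z2 z3 z4 : C) : R :=
  sum_f_R0 (fun j => csum z1 z2 z3 z4 j *
    (cos (alpha z1 z2 z3 z4 (j+1)%nat) + cos (gamma z1 z2 z3 z4 (j+2)%nat)
     + cos (beta z1 z2 z3 z4 (j+3)%nat))) 3.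

From Stdlib Require Import Reals Lra Psatz.
From Coquelicot Require Import Coquelicot.
Open Scope R_scope.

(* The four vertex triples of the quadrilateral form non-degenerate triangles,
   and for side lengths a, b, c of a triangle the law of cosines gives
   cos A + cos B + cos C = 1 + (b + c - a)(c + a - b)(a + b - c) / (2abc) >= 1.
   The second factor of the j-th summand of S2 is the cosine sum of the
   triangle z_{j+1} z_{j+2} z_{j+3}; these four triangle sums T_j together
   contain every angle exactly once, so sum_j T_j = S1.  Since each vertex sum
   c_j is at least -3, (c_j + 5)(T_j - 1) >= 0, and summing over j gives
   S2 >= S1 - 5 S1 + 20, i.e. 8 S1 + 2 S2 >= 40. *)

Lemma Cmod_sub_sym (X Y : C) : Cmod (X - Y) = Cmod (Y - X).
Proof.
  rewrite <- Cmod_opp; f_equal.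
  destruct X, Y; apply injective_projections; simpl; ring.
Qed.

Lemma Cmod_sub_gt0 (X Y : C) : X <> Y -> 0 < Cmod (X - Y).
Proof.
  intro Hneq; apply Cmod_gt_0; intro E; apply Hneq.
  destruct X, Y; injection E; intros.
  apply injective_projections; simpl; lra.
Qed.

Lemma Cmod_sub_triangle (X Y Z : C) : Cmod (X - Z) <= Cmod (X - Y) + Cmod (Y - Z).
Proof.
  replace (X - Z)%C with ((X - Y) + (Y - Z))%C by
    (destruct X, Y, Z; apply injective_projections; simpl; ring).
  apply Cmod_triangle.
Qed.

Lemma angle_law_of_cosines (X Y Z : C) : X <> Y -> Z <> Y ->
  cos (angle X Y Z) = (Cmod (X - Y) ^ 2 + Cmod (Z - Y) ^ 2 - Cmod (X - Z) ^ 2)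
                        / (2 * Cmod (X - Y) * Cmod (Z - Y)).
Proof.
  intros HXY HZY.
  pose proof (Cmod_sub_gt0 _ _ HXY); pose proof (Cmod_sub_gt0 _ _ HZY).
  assert (Hprod : 0 < Cmod (X - Y) * Cmod (Z - Y)) by nra.
  assert (Hdot : Re ((X - Y)%C * Cconj (Z - Y)%C) =
     (Cmod (X - Y) ^ 2 + Cmod (Z - Y) ^ 2 - Cmod (X - Z) ^ 2) / 2).
  { rewrite !Cmod2_alt; destruct X, Y, Z; simpl; field. }
  assert (Hcauchy : Rabs (Re ((X - Y)%C * Cconj (Z - Y)%C))
                    <= Cmod (X - Y) * Cmod (Z - Y)).
  { rewrite <- Cmod_conj with (Z - Y)%C, <- Cmod_mult; apply re_le_Cmod. }
  unfold angle; rewrite cos_acos.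
  - rewrite Hdot; field; split; lra.
  - apply Rabs_le_between.
    rewrite Rabs_div, (Rabs_pos_eq (Cmod (X - Y) * Cmod (Z - Y))) by lra.
    apply (Rdiv_le_1 _ _ Hprod), Hcauchy.
Qed.

Lemma cos_sum_of_sides_ge1 (a b c : R) :
  0 < a -> 0 < b -> 0 < c -> a <= b + c -> b <= c + a -> c <= a + b ->
  1 <= (c ^ 2 + b ^ 2 - a ^ 2) / (2 * c * b) + (c ^ 2 + a ^ 2 - b ^ 2) / (2 * c * a)
       + (b ^ 2 + a ^ 2 - c ^ 2) / (2 * b * a).
Proof.
  intros Ha Hb Hc Hab Hbc Hca.
  replace ((c ^ 2 + b ^ 2 - a ^ 2) / (2 * c * b) + (c ^ 2 + a ^ 2 - b ^ 2) / (2 * c * a)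
           + (b ^ 2 + a ^ 2 - c ^ 2) / (2 * b * a))
    with (1 + (b + c - a) * (c + a - b) * (a + b - c) / (2 * a * b * c))
    by (field; lra).
  assert (0 <= (b + c - a) * (c + a - b) * (a + b - c))
    by (apply Rmult_le_pos; [apply Rmult_le_pos|]; lra).
  assert (0 < 2 * a * b * c) by (repeat apply Rmult_lt_0_compat; lra).
  enough (0 <= (b + c - a) * (c + a - b) * (a + b - c) / (2 * a * b * c)) by lra.
  now apply Rdiv_le_0_compat.
Qed.

Definition cos_angle_sum (X Y Z : C) : R :=
  cos (angle Y X Z) + cos (angle X Y Z) + cos (angle X Z Y).

Lemma cos_angle_sum_ge1 (X Y Z : C) : X <> Y -> Y <> Z -> X <> Z ->
  1 <= cos_angle_sum X Y Z.
Proof.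
  intros HXY HYZ HXZ; unfold cos_angle_sum.
  rewrite !angle_law_of_cosines by congruence.
  rewrite (Cmod_sub_sym Y X), (Cmod_sub_sym Z X), (Cmod_sub_sym Z Y).
  pose proof (Cmod_sub_triangle X Y Z); pose proof (Cmod_sub_triangle Y X Z);
    pose proof (Cmod_sub_triangle X Z Y).
  rewrite (Cmod_sub_sym Y X), (Cmod_sub_sym Z Y) in *.
  pose proof (Cmod_sub_gt0 _ _ HXY); pose proof (Cmod_sub_gt0 _ _ HYZ);
    pose proof (Cmod_sub_gt0 _ _ HXZ).
  set (a := Cmod (Y - Z)) in *; set (b := Cmod (X - Z)) in *;
    set (c := Cmod (X - Y)) in *.
  apply cos_sum_of_sides_ge1; lra.
Qed.

Lemma orient_neq0_distinct (X Y Z : C) :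
  orient X Y Z <> 0 -> X <> Y /\ Y <> Z /\ X <> Z.
Proof.
  unfold orient; destruct X, Y, Z; simpl; intro Hor.
  repeat split; intro E; injection E; intros; subst; apply Hor; ring.
Qed.

Definition S2_factor (z1 z2 z3 z4 : C) (j : nat) : R :=
  cos (alpha z1 z2 z3 z4 (j + 1)) + cos (gamma z1 z2 z3 z4 (j + 2))
  + cos (beta z1 z2 z3 z4 (j + 3)).

Section Quadrilateral.

Variables z1 z2 z3 z4 : C.

Let z := vtx z1 z2 z3 z4.

Lemma vtx_eq_mod4 (i j : nat) : i mod 4 = j mod 4 -> z i = z j.
Proof. intro Hij; unfold z, vtx; now rewrite Hij. Qed.

Lemma vtx_add4 (j : nat) : z (j + 4) = z j.
Proof. apply vtx_eq_mod4; exact (Nat.Div0.mod_add j 1 4). Qed.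

Lemma convex_quad_orient_neq0 : convex_quad z1 z2 z3 z4 ->
  forall j, orient (z j) (z (j + 1)) (z (j + 2)) <> 0.
Proof.
  intros Hconv j.
  assert (Hk : (j mod 4 < 4)%nat) by (apply Nat.mod_upper_bound; lia).
  rewrite (vtx_eq_mod4 j (j mod 4)), (vtx_eq_mod4 (j + 1) (j mod 4 + 1)),
    (vtx_eq_mod4 (j + 2) (j mod 4 + 2))
    by (now rewrite ?Nat.Div0.add_mod_idemp_l, ?Nat.Div0.mod_mod).
  destruct Hconv as [H | H]; specialize (H _ Hk); unfold z; lra.
Qed.

Lemma S2_factor_eq_cos_angle_sum (j : nat) :
  S2_factor z1 z2 z3 z4 j = cos_angle_sum (z (j + 1)) (z (j + 2)) (z (j + 3)).
Proof.
  unfold S2_factor, alpha, beta, gamma, cos_angle_sum; fold z.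
  replace (j + 1 + 1)%nat with (j + 2)%nat by lia.
  replace (j + 1 + 2)%nat with (j + 3)%nat by lia.
  replace (j + 2 + 3)%nat with (j + 1 + 4)%nat by lia.
  replace (j + 2 + 1)%nat with (j + 3)%nat by lia.
  replace (j + 3 + 2)%nat with (j + 1 + 4)%nat by lia.
  replace (j + 3 + 3)%nat with (j + 2 + 4)%nat by lia.
  now rewrite !vtx_add4.
Qed.

Lemma S2_factor_ge1 : convex_quad z1 z2 z3 z4 -> forall j, 1 <= S2_factor z1 z2 z3 z4 j.
Proof.
  intros Hconv j; rewrite S2_factor_eq_cos_angle_sum.
  pose proof (convex_quad_orient_neq0 Hconv (j + 1)) as Hor.
  replace (j + 1 + 1)%nat with (j + 2)%nat in Hor by lia.
  replace (j + 1 + 2)%nat with (j + 3)%nat in Hor by lia.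
  destruct (orient_neq0_distinct _ _ _ Hor) as (H12 & H23 & H13).
  now apply cos_angle_sum_ge1.
Qed.

Lemma sum_S2_factor_eq_S1 : sum_f_R0 (S2_factor z1 z2 z3 z4) 3 = S1 z1 z2 z3 z4.
Proof. unfold S1, S2_factor, csum, alpha, beta, gamma, vtx; simpl; ring. Qed.

Lemma csum_ge_m3 (j : nat) : -3 <= csum z1 z2 z3 z4 j.
Proof.
  unfold csum.
  pose proof (COS_bound (alpha z1 z2 z3 z4 j)); pose proof (COS_bound (beta z1 z2 z3 z4 j));
    pose proof (COS_bound (gamma z1 z2 z3 z4 j)).
  lra.
Qed.

End Quadrilateral.

Lemma sum_f_R0_mul_lower_bound (m : R) (c t : nat -> R) (n : nat) :
  (forall j, (j <= n)%nat -> - m <= c j) -> (forall j, (j <= n)%nat -> 1 <= t j) ->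
  sum_f_R0 c n - m * sum_f_R0 t n + m * INR (S n) <= sum_f_R0 (fun j => c j * t j) n.
Proof.
  intros Hc Ht.
  assert (Hterm : forall j, (j <= n)%nat -> c j - m * t j + m <= c j * t j).
  { intros j Hj.
    assert (0 <= (c j + m) * (t j - 1))
      by (apply Rmult_le_pos; [specialize (Hc j Hj) | specialize (Ht j Hj)]; lra).
    lra. }
  induction n as [|n IH]; simpl sum_f_R0.
  - specialize (Hterm 0%nat (le_n 0)); simpl; lra.
  - rewrite S_INR.
    specialize (IH (fun j Hj => Hc j (le_S _ _ Hj)) (fun j Hj => Ht j (le_S _ _ Hj))
                   (fun j Hj => Hterm j (le_S _ _ Hj))).
    specialize (Hterm (S n) (le_n _)); lra.
Qed.

Theorem corollary2 (z1 z2 z3 z4 : C) :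
  convex_quad z1 z2 z3 z4 ->
  8 * S1 z1 z2 z3 z4 + 2 * S2 z1 z2 z3 z4 >= 40.
Proof.
  intro Hconv.
  assert (Hbound : S1 z1 z2 z3 z4 - 5 * S1 z1 z2 z3 z4 + 5 * INR 4 <= S2 z1 z2 z3 z4).
  { unfold S1 at 1, S2; rewrite <- sum_S2_factor_eq_S1.
    apply sum_f_R0_mul_lower_bound; intros j _.
    - pose proof (csum_ge_m3 z1 z2 z3 z4 j); lra.
    - now apply S2_factor_ge1. }
  simpl INR in Hbound; lra.
Qed.
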